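(* Let $\mathcal{H}$ be a finite-dimensional complex Hilbert space and $n\ge 0$. Let $\mathcal{K}_{n+1}$ be a map of $n+1$ operator arguments on $\mathcal H$ which (a) admits a decomposition $\mathcal{K}_{n+1}=\sum_{(m_0,\ldots,m_n)}\mathcal{K}_{m_0,\ldots,m_n}$ into finitely many completely positive multi-variable maps, where each $\mathcal{K}_{m_0,\ldots,m_n}$ is homogeneous of degree $m_i\in\mathbb{Z}_{\ge0}$ in its $i$-th argument (i.e. $\mathcal K_{m_0,\ldots,m_n}[\ldots,z\hat\rho_i,\ldots]=z^{m_i}\mathcal K_{m_0,\ldots,m_n}[\ldots,\hat\rho_i,\ldots]$ for all $z\in\mathbb C$), each $\mathcal K_{m_0,\ldots,m_n}$ with exactly one $m_i=1$ and all others zero being linear in that argument; (b) satisfies $\mathcal{K}_{n+1}[p\hat\rho_n,\ldots,p\hat\rho_0]=p\,\mathcal{K}_{n+1}[\hat\rho_n,\ldots,\hat\rho_0]$ for all $p\in[0,1]$ and all density matrices $\hat\rho_i$; and (c) is trace preserving on density matrices, i.e. $\mathrm{Tr}\,\mathcal{K}_{n+1}[\hat\rho_n,\ldots,\hat\rho_0]=1$ whenever all $\hat\rho_i$ are density matrices. Then there exist operators $V_{\alpha n m}$ on $\mathcal H$ ($0\le m\le n$, $\alpha$ in a finite index set) and numbers $p_{nm}\ge 0$ with $\sum_{m=0}^n p_{nm}=1$ and $\sum_\alpha V_{\alpha nm}V_{\alpha nm}^\dagger=p_{nm}\hat I$ for each $m$, such that for all density matrices $\hat\rho_0,\ldots,\hat\rho_n$,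 $$\mathcal{K}_{n+1}[\hat\rho_n,\ldots,\hat\rho_0]=\sum_{m=0}^n\sum_\alpha V_{\alpha nm}^\dagger\,\hat\rho_m\,V_{\alpha nm}.$$
   Context: A map $\mathcal K$ of $n+1$ operator arguments is completely positive (in the multi-variable sense of Ando–Choi) if for every $k$ and every $(n+1)$-tuple of positive $k\times k$ block operator matrices $\hat\rho_m=(\hat\rho_{m,ij})_{i,j}$ ($0\le m\le n$), the block matrix with $(i,j)$ block $\mathcal{K}[\hat\rho_{n,ij},\ldots,\hat\rho_{0,ij}]$ is positive. Hypothesis (a) is the Ando–Choi decomposition of multi-variable CP maps (anti-homogeneous parts are excluded), and (b) is the non-signalling condition expressed on sub-normalized states. *)

From HB Require Import structures.
From mathcomp Require Import all_boot all_order all_algebra.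
From mathcomp Require Import complex.
From mathcomp Require Import reals.
Set Implicit Arguments. Unset Strict Implicit. Unset Printing Implicit Defensive.
Import Order.TTheory GRing.Theory Num.Theory.
Local Open Scope ring_scope.

(* Conventions: the Hilbert space is C^d, with C = R[i] the complex numbers
   built over a real field R : realType (a model of the real numbers).  The order on R[i] is the
   usual partial order of a numClosedField: 0 <= z iff z is real and >= 0. *)

Definition adj (R : realType) (m n : nat) (A : 'M[R[i]]_(m, n)) : 'M[R[i]]_(n, m) :=
  (map_mx (fun z : R[i] => z^*) A)^T.

Definition psd (R : realType) (d : nat) (A : 'M[R[i]]_d) : Prop :=
  forall v : 'cV[R[i]]_d, 0 <= (adj v *m A *m v) 0 0.

(* positivity of a k x k block operator matrix with blocks B i j : 'M_d,
   i.e. of the operator on C^k (x) C^d with these blocks *)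
Definition psd_block (R : realType) (d k : nat) (B : 'I_k -> 'I_k -> 'M[R[i]]_d) : Prop :=
  forall v : 'I_k -> 'cV[R[i]]_d,
    0 <= (\sum_(i < k) \sum_(j < k) (adj (v i) *m B i j *m v j)) 0 0.

Definition density (R : realType) (d : nat) (A : 'M[R[i]]_d) : Prop :=
  psd A /\ \tr A = 1.

(* a map of n+1 operator arguments; rho m is the m-th argument hat rho_m,
   so K rho stands for K[rho_n, ..., rho_0] *)
Definition multimap (R : realType) (d n : nat) :=
  ('I_n.+1 -> 'M[R[i]]_d) -> 'M[R[i]]_d.

Definition mCP (R : realType) (d n : nat) (K : multimap R d n) : Prop :=
  forall (k : nat) (rh : 'I_n.+1 -> 'I_k -> 'I_k -> 'M[R[i]]_d),
    (forall m, psd_block (rh m)) ->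
    psd_block (fun i j => K (fun m => rh m i j)).

Definition upd (R : realType) (d n : nat) (rho : 'I_n.+1 -> 'M[R[i]]_d)
  (m : 'I_n.+1) (X : 'M[R[i]]_d) : 'I_n.+1 -> 'M[R[i]]_d :=
  fun l => if l == m then X else rho l.

Definition homogeneous (R : realType) (d n : nat) (K : multimap R d n)
  (deg : 'I_n.+1 -> nat) : Prop :=
  forall (rho : 'I_n.+1 -> 'M[R[i]]_d) (m : 'I_n.+1) (z : R[i]),
    K (upd rho m (z *: rho m)) = z ^+ deg m *: K rho.

Definition linear_in (R : realType) (d n : nat) (K : multimap R d n)
  (m : 'I_n.+1) : Prop :=
  forall (rho : 'I_n.+1 -> 'M[R[i]]_d) (a : R[i]) (X Y : 'M[R[i]]_d),
    K (upd rho m (a *: X + Y)) = a *: K (upd rho m X) + K (upd rho m Y).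

From HB Require Import structures.
From mathcomp Require Import all_boot all_order all_algebra.
From mathcomp Require Import complex.
From mathcomp Require Import reals.
From mathcomp Require Import ring.
From Stdlib Require Import FunctionalExtensionality.
Set Implicit Arguments. Unset Strict Implicit. Unset Printing Implicit Defensive.
Import Order.TTheory GRing.Theory Num.Theory.
Local Open Scope ring_scope.

(* Writing D_t for the total degree of the component K_t, homogeneity gives
   K[p rho] = sum_t p^(D_t) K_t[rho]; by (b) this polynomial in p equals
   p K[rho] on [0, 1], so on density matrices only the components of total
   degree one survive.  Such a component is homogeneous of degree one in a
   single argument m and of degree zero in the others, so it only depends on
   rho_m and is linear in it: K[rho] = sum_m Phi_m(rho_m).  Complete
   positivity makes the Choi matrix of Phi_m positive, and a Gram
   factorisation of that matrix (from the spectral theorem) gives Kraus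
   operators V_(a m).  Freezing all arguments but one, (c) forces
   Tr Phi_m(X) to be a constant p_m on density matrices, which by
   polarisation means sum_a V V^+ = p_m I. *)

Section SesquilinearForms.
Variables (C : numClosedFieldType) (T : finType).
Implicit Types (G H : T -> T -> C) (u v w : T -> C).

Definition sform G u w := \sum_x \sum_y (u x)^* * G x y * w y.

Definition psd_form G := forall v, 0 <= sform G v v.

Definition basisv x : T -> C := fun z => (z == x)%:R.

Lemma sformDl G u1 u2 w :
  sform G (fun x => u1 x + u2 x) w = sform G u1 w + sform G u2 w.
Proof.
rewrite -big_split; apply: eq_bigr => x _; rewrite -big_split.
by apply: eq_bigr => y _; rewrite rmorphD !mulrDl.
Qed.

Lemma sformZl G a u w : sform G (fun x => a * u x) w = a^* * sform G u w.
Proof.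
rewrite mulr_sumr; apply: eq_bigr => x _; rewrite mulr_sumr.
by apply: eq_bigr => y _; rewrite rmorphM !mulrA.
Qed.

Lemma sformDr G u w1 w2 :
  sform G u (fun y => w1 y + w2 y) = sform G u w1 + sform G u w2.
Proof.
rewrite -big_split; apply: eq_bigr => x _; rewrite -big_split.
by apply: eq_bigr => y _; rewrite mulrDr.
Qed.

Lemma sformZr G a u w : sform G u (fun y => a * w y) = a * sform G u w.
Proof.
rewrite mulr_sumr; apply: eq_bigr => x _; rewrite mulr_sumr.
by apply: eq_bigr => y _; rewrite mulrCA.
Qed.

Lemma sformB G H u w :
  sform (fun x y => G x y - H x y) u w = sform G u w - sform H u w.
Proof.
rewrite -sumrB; apply: eq_bigr => x _; rewrite -sumrB.
by apply: eq_bigr => y _; rewrite mulrBr mulrBl.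
Qed.

Lemma sform_basisl G x w : sform G (basisv x) w = \sum_y G x y * w y.
Proof.
rewrite /sform (bigD1 x) //= [X in _ + X]big1 ?addr0 => [|z /negbTE zx].
  by apply: eq_bigr => y _; rewrite /basisv eqxx rmorph1 mul1r.
by rewrite big1 // => y _; rewrite /basisv zx rmorph0 !mul0r.
Qed.

Lemma sform_basis G x y : sform G (basisv x) (basisv y) = G x y.
Proof.
rewrite sform_basisl (bigD1 y) //= [X in _ + X]big1 ?addr0 => [|z /negbTE zy].
  by rewrite /basisv eqxx mulr1.
by rewrite /basisv zy mulr0.
Qed.

Lemma sform_basis_pair G x y a :
  let v z := basisv x z + a * basisv y z in
  sform G v v = G x x + a * G x y + a^* * G y x + a^* * a * G y y.
Proof.
by rewrite /= sformDl sformZl !sformDr !sformZr !sform_basis mulrDr !addrA mulrA.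
Qed.

Lemma sform_adjoint G w :
  sform (fun x y => (G y x)^*) w w = (sform G w w)^*.
Proof.
rewrite /sform exchange_big rmorph_sum; apply: eq_bigr => x _; rewrite rmorph_sum.
by apply: eq_bigr => y _; rewrite !rmorphM /= conjCK; ring.
Qed.

(* Polarisation: test on [e_x + e_y] and [e_x + i e_y]. *)
Lemma sform_eq0 G : (forall w, sform G w w = 0) -> forall x y, G x y = 0.
Proof.
move=> G0 x y.
have Gxx z : G z z = 0 by rewrite -sform_basis G0.
have := G0 (fun z => basisv x z + 1 * basisv y z).
have := G0 (fun z => basisv x z + 'i * basisv y z).
rewrite !sform_basis_pair !Gxx conjCi conjC1 !mulr0 !addr0 !add0r !mul1r.
move=> /eqP; rewrite mulNr -mulrBr mulf_eq0 (negbTE (neq0Ci C)) /= subr_eq0 => /eqP->.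
by move/eqP; rewrite -mulr2n mulrn_eq0 /= => /eqP.
Qed.

Lemma psd_form_herm G : psd_form G -> forall x y, G y x = (G x y)^*.
Proof.
move=> psdG x y; apply/eqP; rewrite -subr_eq0; apply/eqP.
apply: (@sform_eq0 (fun x y => G x y - (G y x)^*)) => w.
by rewrite sformB sform_adjoint conj_Creal ?subrr // ger0_real.
Qed.
End SesquilinearForms.

Section Gram.
Variable C : numClosedFieldType.

Lemma sform_scalar_mx d (c : C) (w : 'I_d -> C) :
  sform c%:M w w = c * \sum_k (w k)^* * w k.
Proof.
rewrite /sform mulr_sumr; apply: eq_bigr => x _.
rewrite (bigD1 x) //= [X in _ + X]big1 ?addr0 => [|y /negbTE yx].
  by rewrite mxE eqxx mulr1n; ring.
by rewrite mxE eq_sym yx mulr0n mulr0 mul0r.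
Qed.

Lemma psd_form_gram_ord N (G : 'I_N -> 'I_N -> C) : psd_form G ->
  exists L : 'I_N -> 'I_N -> C, forall a b, G a b = \sum_k (L k a)^* * L k b.
Proof.
(* Spectral theorem: G = P^* diag(D) P, P unitary, D >= 0; take L := diag(sqrt D) P. *)
move=> psdG; pose A := \matrix_(a, b) G a b.
have /orthomx_spectralP Adiag : A \is normalmx.
  apply/hermitian_normalmx/is_hermitianmxP; apply/matrixP => a b.
  by rewrite expr0 scale1r !mxE (psd_form_herm psdG).
set P := spectralmx A in Adiag; set D := spectral_diag A in Adiag.
have invP a k : invmx P a k = (P k a)^*.
  by rewrite invmx_unitary ?spectral_unitarymx // !mxE.
have D_ge0 k : 0 <= D 0 k.
  have : P *m A *m invmx P = diag_mx D.
    by rewrite Adiag !mulmxA mulmxV ?spectral_unit // mul1mx mulmxK ?spectral_unit.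
  move/matrixP/(_ k k); rewrite [diag_mx D k k]mxE eqxx mulr1n => <-.
  have /= := psdG (fun a => (P k a)^*); rewrite /sform exchange_big.
  under eq_bigr do under eq_bigr do rewrite conjCK.
  congr (0 <= _); rewrite [RHS]mxE; apply: eq_bigr => b _.
  rewrite mxE mulr_suml invP; apply: eq_bigr => a _.
  by rewrite mxE.
exists (fun k a => sqrtC (D 0 k) * P k a) => a b.
have -> : G a b = A a b by rewrite mxE.
rewrite Adiag mul_mx_diag mxE; apply: eq_bigr => k _.
rewrite !mxE invP rmorphM /= [(sqrtC _)^*]conj_Creal ?sqrtC_real //.
by rewrite mulrACA -expr2 sqrtCK; ring.
Qed.

Lemma sform_enum (T : finType) (G : T -> T -> C) (u w : 'I_#|T| -> C) :
  sform G (fun x => u (enum_rank x)) (fun x => w (enum_rank x)) =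
  sform (fun a b => G (enum_val a) (enum_val b)) u w.
Proof.
have val_bij := onW_bij predT (enum_val_bij T).
rewrite /sform (reindex (@enum_val T predT)) //=; apply: eq_bigr => a _.
rewrite (reindex (@enum_val T predT)) //=.
by apply: eq_bigr => b _; rewrite !enum_valK.
Qed.

Lemma psd_form_gram (T : finType) (G : T -> T -> C) : psd_form G ->
  exists L : 'I_#|T| -> T -> C, forall x y, G x y = \sum_k (L k x)^* * L k y.
Proof.
move=> psdG.
have [L GL] : exists L : 'I_#|T| -> 'I_#|T| -> C,
    forall a b, G (enum_val a) (enum_val b) = \sum_k (L k a)^* * L k b.
  by apply: psd_form_gram_ord => v; rewrite -sform_enum.
by exists (fun k x => L k (enum_rank x)) => x y; rewrite -GL !enum_rankK.
Qed.
End Gram.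

Lemma linear_sum_delta (F : pzRingType) (V : lmodType F) m n
    (Phi : 'M[F]_(m, n) -> V) :
  linear Phi -> forall X, Phi X = \sum_i \sum_j X i j *: Phi (delta_mx i j).
Proof.
move=> linPhi X.
pose PhiL : {linear 'M[F]_(m, n) -> V} :=
  HB.pack Phi (GRing.isLinear.Build _ _ _ _ Phi linPhi).
rewrite [in LHS](matrix_sum_delta X) -[Phi]/(PhiL : _ -> _) linear_sum.
under eq_bigr do rewrite linear_sum.
by under eq_bigr do under eq_bigr do rewrite linearZ.
Qed.

Section Operators.
Variable R : realType.
Local Notation C := R[i].

Lemma adjE m n (A : 'M[C]_(m, n)) i j : adj A i j = (A j i)^*.
Proof. by rewrite !mxE. Qed.

Lemma mx_sform d (A : 'M[C]_d) (w v : 'I_d -> C) :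
  (adj (\col_k w k) *m A *m \col_k v k) 0 0 = sform A w v.
Proof.
rewrite mxE; under eq_bigr do rewrite mxE mulr_suml.
rewrite exchange_big; apply: eq_bigr => i _; apply: eq_bigr => j _.
by rewrite !mxE.
Qed.

Lemma psd_block_form k d (B : 'I_k -> 'I_k -> 'M[C]_d) :
  psd_block B -> psd_form (fun x y : 'I_k * 'I_d => B x.1 y.1 x.2 y.2).
Proof.
set G := fun x y => _; move=> psdB w; have := psdB (fun i => \col_p w (i, p)).
rewrite summxE; under eq_bigr do rewrite summxE.
under eq_bigr do under eq_bigr do rewrite mx_sform.
under eq_bigr do rewrite exchange_big /=.
under eq_bigr do under eq_bigr do rewrite pair_bigA /=.
rewrite pair_bigA; set S := \sum_x _; suff -> : sform G w w = S by [].
by rewrite /S /sform; apply: eq_bigr => -[i p] _; apply: eq_bigr => -[j q] _.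
Qed.

Lemma psd_block_sum d k I (r : seq I) (P : pred I)
    (B : I -> 'I_k -> 'I_k -> 'M[C]_d) :
  (forall t, P t -> psd_block (B t)) ->
  psd_block (fun i j => \sum_(t <- r | P t) B t i j).
Proof.
move=> psdB v.
under eq_bigr do under eq_bigr do rewrite mulmx_sumr mulmx_suml.
under eq_bigr do rewrite exchange_big.
by rewrite exchange_big summxE; apply: sumr_ge0 => t Pt; apply: psdB.
Qed.

Lemma psd_block0 d k : psd_block (fun i j : 'I_k => 0 : 'M[C]_d).
Proof.
by move=> v; rewrite big1 ?mxE // => i _; rewrite big1 // => j _; rewrite mulmx0 mul0mx.
Qed.

Lemma delta_form d (u v : 'cV[C]_d) i j :
  (adj u *m delta_mx i j *m v) 0 0 = (u i 0)^* * v j 0.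
Proof.
by rewrite -(mul_delta_mx (0 : 'I_1)) mulmxA -colE -mulmxA -rowE mxE big_ord1 !mxE.
Qed.

Lemma psd_block_delta d : psd_block (fun i j : 'I_d => delta_mx i j : 'M[C]_d).
Proof.
move=> v; rewrite summxE.
under eq_bigr do rewrite summxE; under eq_bigr do under eq_bigr do rewrite delta_form.
under eq_bigr do rewrite -mulr_sumr.
by rewrite -mulr_suml -rmorph_sum mulrC mul_conjC_ge0.
Qed.

Lemma density_delta d (i : 'I_d) : density (delta_mx i i : 'M[C]_d).
Proof.
split=> [v|]; first by rewrite delta_form mulrC mul_conjC_ge0.
rewrite /mxtrace (bigD1 i) //= mxE !eqxx big1 ?addr0 // => k /negbTE ki.
by rewrite mxE ki.
Qed.

Lemma density_dim0 (A : 'M[C]_0) : ~ density A.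
Proof. by case=> _ /eqP; rewrite /mxtrace big_ord0 eq_sym oner_eq0. Qed.

Lemma choi_kraus d (Phi : 'M[C]_d -> 'M[C]_d) : linear Phi ->
  psd_block (fun i j => Phi (delta_mx i j)) ->
  exists V : 'I_#|{: 'I_d * 'I_d}| -> 'M[C]_d,
    forall X, Phi X = \sum_a adj (V a) *m X *m V a.
Proof.
move=> linPhi /psd_block_form /psd_form_gram [L GL].
exists (fun a => \matrix_(j, q) L a (j, q)) => X.
rewrite (linear_sum_delta linPhi); apply/matrixP => p q.
have Phi_delta i j : Phi (delta_mx i j) p q = \sum_a (L a (i, p))^* * L a (j, q).
  exact: GL (i, p) (j, q).
rewrite !summxE; under eq_bigr do rewrite summxE.
under eq_bigr do under eq_bigr do rewrite mxE Phi_delta mulr_sumr.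
under [RHS]eq_bigr do rewrite mxE.
under [RHS]eq_bigr do under eq_bigr do rewrite mxE mulr_suml.
under eq_bigr do rewrite exchange_big; rewrite exchange_big.
apply: eq_bigr => a _; rewrite exchange_big; apply: eq_bigr => j _.
by apply: eq_bigr => i _; rewrite !mxE; ring.
Qed.

Lemma density_rank1 d (w : 'I_d -> C) (s : C) : 0 <= s ->
  s * \sum_k (w k)^* * w k = 1 -> density (s *: (\col_k w k *m adj (\col_k w k))).
Proof.
set u := \col_k w k => s_ge0 s_norm; split.
  move=> v; rewrite -scalemxAr -scalemxAl mxE mulr_ge0 //.
  rewrite !mulmxA -[_ *m adj u *m v]mulmxA mxE big_ord1.
  have -> : (adj u *m v) 0 0 = ((adj v *m u) 0 0)^*.
    rewrite !mxE rmorph_sum; apply: eq_bigr => k _.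
    by rewrite !mxE rmorphM /= conjCK mulrC.
  exact: mul_conjC_ge0.
rewrite mxtraceZ (mxtrace_mulC u) /mxtrace big_ord1 -[adj u]mulmx1 mx_sform.
by rewrite (sform_scalar_mx 1) mul1r.
Qed.

Lemma kraus_trace_const d N (V : 'I_N -> 'M[C]_d.+1) (c : C) :
  (forall X, density X -> \tr (\sum_a adj (V a) *m X *m V a) = c) ->
  0 <= c /\ \sum_a V a *m adj (V a) = c%:M.
Proof.
move=> trV; set W := \sum_a V a *m adj (V a).
have trW X : \tr (\sum_a adj (V a) *m X *m V a) = \tr (W *m X).
  rewrite /W mulmx_suml !raddf_sum /=; apply: eq_bigr => a _.
  by rewrite mxtrace_mulC mulmxA.
have norm_ge0 (w : 'I_d.+1 -> C) : 0 <= \sum_k (w k)^* * w k.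
  by apply: sumr_ge0 => k _; rewrite mulrC mul_conjC_ge0.
have sform_W w : sform W w w = sform c%:M w w.
  rewrite sform_scalar_mx.
  have [w0|nz] := eqVneq (\sum_k (w k)^* * w k) 0.
    have wk0 k : w k = 0.
      apply/eqP; rewrite -mul_conjC_eq0 mulrC; apply/eqP.
      by move: w0; move/psumr_eq0P => -> // j _; rewrite mulrC mul_conjC_ge0.
    rewrite w0 mulr0 /sform big1 // => x _.
    by rewrite big1 // => y _; rewrite !wk0 mulr0.
  have s_ge0 : 0 <= (\sum_k (w k)^* * w k)^-1 by rewrite invr_ge0 norm_ge0.
  have := trV _ (density_rank1 s_ge0 (mulVf nz)).
  rewrite trW -scalemxAr mxtraceZ mulmxA mxtrace_mulC mulmxA.
  rewrite /mxtrace big_ord1 mx_sform => <-.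
  by rewrite mulrAC mulVf ?mul1r.
have W_scalar : W = c%:M.
  apply/matrixP => i j; apply/eqP; rewrite -subr_eq0; apply/eqP.
  apply: (@sform_eq0 _ _ (fun i j => W i j - (c%:M : 'M_d.+1) i j)) => w.
  by rewrite sformB sform_W subrr.
split=> //; have := congr1 (fun M : 'M_d.+1 => M 0 0) W_scalar.
rewrite mxE eqxx mulr1n summxE => <-; apply: sumr_ge0 => a _.
by rewrite mxE; apply: sumr_ge0 => k _; rewrite adjE mul_conjC_ge0.
Qed.
End Operators.

Lemma poly_eq0_on_unit_interval (F : numFieldType) (P : {poly F}) :
  (forall p, 0 <= p <= 1 -> P.[p] = 0) -> P = 0.
Proof.
move=> P0; apply/eqP; apply: contraT => /max_poly_roots roots.
pose s := [seq (k.+1%:R : F)^-1 | k <- iota 0 (size P)].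
suff : (size s < size P)%N by rewrite size_map size_iota ltnn.
apply: roots.
  apply/allP => _ /mapP[k _ ->]; apply/eqP/P0.
  by rewrite invr_ge0 ler0n invf_le1 ?ltr0n // ler1n.
rewrite map_inj_uniq ?iota_uniq // => k l /invr_inj /eqP.
by rewrite eqr_nat => /eqP[].
Qed.

Lemma sum_deg1_eq (F : numFieldType) (I : finType) (D : I -> nat) (c : I -> F) :
  (forall p, 0 <= p <= 1 -> \sum_t p ^+ D t * c t = p * \sum_t c t) ->
  \sum_(t | D t == 1%N) c t = \sum_t c t.
Proof.
move=> lin01; pose P : {poly F} := \sum_t c t *: ('X^(D t) - 'X).
have /(congr1 (fun q : {poly F} => q`_1)) : P = 0.
  apply: poly_eq0_on_unit_interval => p /lin01; rewrite mulr_sumr => {}lin01.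
  rewrite horner_sum -[RHS](subrr (\sum_t p ^+ D t * c t)) [X in _ - X]lin01 -sumrB.
  by apply: eq_bigr => t _; rewrite hornerZ hornerD hornerN hornerXn hornerX; ring.
rewrite coef_sum coef0 => coef1; apply/eqP; rewrite -subr_eq0 big_mkcond -sumrB.
apply/eqP; rewrite -[X in _ = X]coef1; apply: eq_bigr => t _.
rewrite coefZ coefB coefXn coefX eqxx eq_sym.
by case: (_ == _) => /=; ring.
Qed.

Section Multimaps.
Variables (R : realType) (d n : nat).
Local Notation C := R[i].
Implicit Types (K : multimap R d n) (deg : 'I_n.+1 -> nat) (rho : 'I_n.+1 -> 'M[C]_d).

Lemma homogeneous_scale K deg (c : 'I_n.+1 -> C) rho : homogeneous K deg ->
  K (fun l => c l *: rho l) = (\prod_l c l ^+ deg l) *: K rho.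
Proof.
move=> homK.
suff scale_on s : uniq s ->
    K (fun l => if l \in s then c l *: rho l else rho l) =
    (\prod_(l <- s) c l ^+ deg l) *: K rho.
  rewrite -big_enum -scale_on ?enum_uniq //; congr K.
  by apply: functional_extensionality => l; rewrite mem_enum.
elim: s => [|x s IH] /=; first by rewrite big_nil scale1r.
case/andP=> xNs /IH {}IH; set f := fun l => if l \in s then c l *: rho l else rho l.
have -> : (fun l => if l \in x :: s then c l *: rho l else rho l) = upd f x (c x *: f x).
  apply: functional_extensionality => l; rewrite /upd /f inE.
  by case: eqVneq => [->|] //=; rewrite (negbTE xNs).
by rewrite homK IH big_cons scalerA.
Qed.

Lemma homogeneous_scale_all K deg (z : C) rho : homogeneous K deg ->
  K (fun l => z *: rho l) = z ^+ (\sum_l deg l) *: K rho.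
Proof. by move=> homK; rewrite (homogeneous_scale (fun=> z) rho homK) prodrXr. Qed.

Lemma homogeneous_upd0 K deg rho m : homogeneous K deg ->
  (forall l, l != m -> deg l = 0%N) -> K (upd (fun=> 0) m (rho m)) = K rho.
Proof.
(* Scale by the indicator of [m]: the arguments of degree 0 vanish, as [0 ^+ 0 = 1]. *)
move=> homK deg0; have := homogeneous_scale (fun l => (l == m)%:R) rho homK.
rewrite big1 ?scale1r => [<-|l _]; last first.
  by case: eqVneq => [_|/deg0 ->]; rewrite ?expr1n ?expr0.
congr K; apply: functional_extensionality => l; rewrite /upd.
by case: eqVneq => [->|_]; rewrite ?scale1r ?scale0r.
Qed.
End Multimaps.

Definition unit_deg n (deg : 'I_n.+1 -> nat) (m : 'I_n.+1) : bool :=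
  (\sum_l deg l == 1)%N && (deg m == 1)%N.

Lemma unit_deg_other n (deg : 'I_n.+1 -> nat) m l :
  unit_deg deg m -> l != m -> deg l = 0%N.
Proof.
case/andP=> /sum_nat_eq1[m' [_ deg_m' deg0]] /eqP deg_m.
case: (eqVneq m m') => [-> lm'|/deg0/(_ isT)]; last by rewrite deg_m.
exact: deg0.
Qed.

Lemma sum_unit_deg (V : nmodType) n N (deg : 'I_N -> 'I_n.+1 -> nat) (F : 'I_N -> V) :
  \sum_(t | (\sum_l deg t l == 1)%N) F t = \sum_m \sum_(t | unit_deg (deg t) m) F t.
Proof.
under [RHS]eq_bigr do rewrite big_mkcond /=.
rewrite [RHS]exchange_big big_mkcond /=; apply: eq_bigr => t _; rewrite -big_mkcond /=.
case tot: (_ == 1)%N; last by rewrite big_pred0 // => m; rewrite /unit_deg tot.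
have /sum_nat_eq1[m [_ deg_m _]] := tot.
have unit_m : unit_deg (deg t) m by rewrite /unit_deg tot deg_m.
rewrite (big_pred1 m) // => m'; rewrite /unit_deg tot /=.
by case: (eqVneq m' m) => [->|/(unit_deg_other unit_m) ->]; rewrite ?deg_m.
Qed.

Lemma sum_components_const (T : Type) (V : zmodType) n (P : T -> Prop)
    (f : 'I_n.+1 -> T -> V) (c : V) :
  (forall x : 'I_n.+1 -> T, (forall m, P (x m)) -> \sum_m f m (x m) = c) ->
  forall m y z, P y -> P z -> f m y = f m z.
Proof.
move=> sum_c m y z Py Pz.
have Px l : P (if l == m then y else z) by case: (l == m).
have := sum_c _ Px; rewrite -(sum_c (fun=> z)) //.
rewrite (bigD1 m) //= eqxx [in RHS](bigD1 m) //=.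
by rewrite (eq_bigr (fun l => f l z)) => [/addIr|l /negbTE ->].
Qed.

Section Marginals.
Variables (R : realType) (d n N : nat).
Variables (deg : 'I_N -> 'I_n.+1 -> nat) (Ks : 'I_N -> multimap R d n).
Local Notation C := R[i].

Definition marginal (m : 'I_n.+1) (X : 'M[C]_d) : 'M[C]_d :=
  \sum_(t | unit_deg (deg t) m) Ks t (upd (fun=> 0) m X).

Lemma marginal_linear :
    (forall t m, deg t m = 1%N -> (forall l, l != m -> deg t l = 0%N) ->
       linear_in (Ks t) m) ->
  forall m, linear (marginal m).
Proof.
move=> Ks_lin m a X Y; rewrite /marginal scaler_sumr -big_split.
apply: eq_bigr => t unit_t; apply: Ks_lin => [|l]; last exact: unit_deg_other.
by case/andP: unit_t => _ /eqP.
Qed.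

Lemma marginal_choi_psd : (forall t, mCP (Ks t)) ->
  forall m, psd_block (fun i j => marginal m (delta_mx i j)).
Proof.
move=> Ks_cp m; apply: psd_block_sum => t _.
apply: (Ks_cp t d (fun l i j => upd (fun=> 0) m (delta_mx i j) l)) => l.
by rewrite /upd; case: (l == m); [exact: psd_block_delta | exact: psd_block0].
Qed.

Hypothesis Ks_hom : forall t, homogeneous (Ks t) (deg t).

Lemma homogeneous_sum_deg1 (rho : 'I_n.+1 -> 'M[C]_d) :
  (forall p : C, 0 <= p <= 1 ->
     \sum_t Ks t (fun m => p *: rho m) = p *: \sum_t Ks t rho) ->
  \sum_(t | (\sum_m deg t m == 1)%N) Ks t rho = \sum_t Ks t rho.
Proof.
move=> Ks_nonsig; apply/matrixP => x y; rewrite !summxE.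
apply: sum_deg1_eq => p /Ks_nonsig /(congr1 (fun M : 'M_d => M x y)).
rewrite summxE mxE summxE => <-; apply: eq_bigr => t _.
by rewrite (homogeneous_scale_all _ _ (Ks_hom t)) mxE.
Qed.

Lemma sum_marginals (rho : 'I_n.+1 -> 'M[C]_d) :
  (forall p : C, 0 <= p <= 1 ->
     \sum_t Ks t (fun m => p *: rho m) = p *: \sum_t Ks t rho) ->
  \sum_t Ks t rho = \sum_m marginal m (rho m).
Proof.
move=> /homogeneous_sum_deg1 <-; rewrite sum_unit_deg; apply: eq_bigr => m _.
apply: eq_bigr => t unit_t; apply/esym/homogeneous_upd0 => [|l].
  exact: Ks_hom.
exact: unit_deg_other.
Qed.
End Marginals.

Theorem mainTheorem4 (R : realType) (d n : nat) (K : multimap R d n) :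
  (* (a) Ando--Choi decomposition into finitely many homogeneous CP maps *)
  (exists (N : nat) (deg : 'I_N -> 'I_n.+1 -> nat) (Ks : 'I_N -> multimap R d n),
     [/\ forall rho, K rho = \sum_(t < N) Ks t rho,
         forall t, mCP (Ks t),
         forall t, homogeneous (Ks t) (deg t) &
         forall t (m : 'I_n.+1),
           deg t m = 1%N -> (forall l, l != m -> deg t l = 0%N) ->
           linear_in (Ks t) m]) ->
  (* (b) non-signalling condition on sub-normalized states *)
  (forall (p : R[i]) (rho : 'I_n.+1 -> 'M[R[i]]_d),
     0 <= p <= 1 -> (forall m, density (rho m)) ->
     K (fun m => p *: rho m) = p *: K rho) ->
  (* (c) trace preservation on density matrices *)
  (forall rho : 'I_n.+1 -> 'M[R[i]]_d,
     (forall m, density (rho m)) -> \tr (K rho) = 1) ->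
  exists (A : 'I_n.+1 -> nat) (V : forall m : 'I_n.+1, 'I_(A m) -> 'M[R[i]]_d)
         (p : 'I_n.+1 -> R[i]),
    [/\ forall m, 0 <= p m,
        \sum_(m < n.+1) p m = 1,
        forall m, \sum_(a < A m) (V m a *m adj (V m a)) = (p m)%:M &
        forall rho : 'I_n.+1 -> 'M[R[i]]_d,
          (forall m, density (rho m)) ->
          K rho = \sum_(m < n.+1) \sum_(a < A m) (adj (V m a) *m rho m *m V m a)].
Proof.
case=> N [deg [Ks [K_dec Ks_cp Ks_hom Ks_lin]]] K_nonsig K_tp.
case: d => [|d] in K Ks K_dec Ks_cp Ks_hom Ks_lin K_nonsig K_tp *.
  exists (fun=> 0%N), (fun _ _ => 0), (fun m => (m == ord0)%:R).
  split=> [m||m|rho /(_ ord0) /density_dim0 //]; first by rewrite ler0n.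
    by rewrite (bigD1 ord0) //= big1 ?addr0 // => m /negbTE ->.
  by apply/matrixP => -[].
have K_marg rho : (forall m, density (rho m)) ->
    K rho = \sum_m marginal deg Ks m (rho m).
  move=> dens; rewrite K_dec (sum_marginals Ks_hom) // => p p01.
  by rewrite -!K_dec; exact: K_nonsig.
have marg_tp rho : (forall m, density (rho m)) ->
    \sum_m \tr (marginal deg Ks m (rho m)) = 1.
  by move=> dens; rewrite -raddf_sum /= -K_marg // K_tp.
have [V V_kraus] := fin_all_exists (fun m =>
  choi_kraus (marginal_linear Ks_lin m) (marginal_choi_psd deg Ks_cp m)).
pose p m := \tr (marginal deg Ks m (delta_mx 0 0)).
have V_trace m X : density X -> \tr (\sum_a adj (V m a) *m X *m V m a) = p m.
  move=> dX; rewrite -V_kraus.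
  exact: (sum_components_const (f := fun m X => \tr (marginal deg Ks m X))
    marg_tp m dX (density_delta R 0)).
have V_sum m := kraus_trace_const (V_trace m).
have e00_dens (m : 'I_n.+1) := density_delta R (0 : 'I_d.+1).
exists (fun=> #|{: 'I_d.+1 * 'I_d.+1}|), V, p; split.
- by move=> m; case: (V_sum m).
- by rewrite -(K_tp _ e00_dens) (K_marg _ e00_dens) raddf_sum.
- by move=> m; case: (V_sum m).
- by move=> rho dens; rewrite (K_marg _ dens); apply: eq_bigr => m _.
Qed.
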